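(* Let $s\ge 1$ and $n\ge 2$ be integers and let $A=(a_{i,j})$ be a real $s\times s$ matrix with all entries non-negative. Then \[ s^{\,n-1}\,\mathrm{tr}(A^n)\ \ge\ \big(\mathrm{tr}(A)\big)^n. \] Moreover, for $n=2$ equality holds if and only if $a_{k,k}=a_{1,1}$ for all $k=2,\dots,s$ and $a_{i,j}a_{j,i}=0$ for all $i\ne j$; and for $n\ge 3$, equality $s^{n-1}\mathrm{tr}(A^n)=(\mathrm{tr}A)^n$ implies $a_{k,k}=a_{1,1}$ for all $k=2,\dots,s$. *)

From HB Require Import structures.
From mathcomp Require Import all_boot all_order all_algebra.
Set Implicit Arguments. Unset Strict Implicit. Unset Printing Implicit Defensive.

From HB Require Import structures.
From mathcomp Require Import all_boot all_order all_algebra.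
From mathcomp Require Import ring.
Set Implicit Arguments. Unset Strict Implicit. Unset Printing Implicit Defensive.
Import Order.TTheory GRing.Theory Num.Theory.
Local Open Scope ring_scope.

(* Let A be an s x s matrix with non-negative entries and d_i := A_ii.
   - Every entry of A^n is non-negative, and keeping only the term of the
     diagonal entry (A^n)_ii that follows the loop i -> i -> ... -> i gives
     d_i^n <= (A^n)_ii, hence  sum_i d_i^n <= tr(A^n).
   - The power mean inequality (sum_i d_i)^n <= s^(n-1) sum_i d_i^n follows
     by induction from Chebyshev's sum inequality for the similarly ordered
     families (d_i) and (d_i^m), which rests on the identity
       sum_i sum_j (x_i - x_j)(y_i - y_j) = 2 (s sum_i x_i y_i - sum x sum y).
     Equality (with n >= 2) forces every (d_i - d_j)(d_i^m - d_j^m) to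
     vanish, so the diagonal is constant.
   - Chaining the two gives (tr A)^n <= s^(n-1) tr(A^n); in the equality case
     both links are equalities.  For n = 2 the gap tr(A^2) - sum_i d_i^2 is
     sum_{i<>j} a_ij a_ji, whose terms are non-negative, so it vanishes iff
     all a_ij a_ji do; conversely a constant diagonal with these products
     zero gives equality directly. *)

Lemma chebyshev_identity (R : comPzRingType) (s : nat) (x y : 'I_s -> R) :
  \sum_i \sum_j (x i - x j) * (y i - y j) =
  2%:R * (s%:R * \sum_i x i * y i - (\sum_i x i) * (\sum_i y i)).
Proof.
have row_sum i : \sum_j (x i - x j) * (y i - y j) =
    s%:R * (x i * y i) + \sum_j x j * y j - x i * \sum_j y j - y i * \sum_j x j.
  have expand j : (x i - x j) * (y i - y j) =
      x i * y i + x j * y j - x i * y j - y i * x j by ring.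
  under eq_bigr => j _ do rewrite expand.
  by rewrite !sumrB big_split /= sumr_const card_ord mulr_natl -!mulr_sumr.
under eq_bigr => i _ do rewrite row_sum.
rewrite !sumrB big_split /= sumr_const card_ord -!mulr_sumr -!mulr_suml.
rewrite -mulr_natl; ring.
Qed.

Lemma similarly_ordered_ge0 (R : realFieldType) (a b : R) (m : nat) :
  0 <= a -> 0 <= b -> 0 <= (a - b) * (a ^+ m - b ^+ m).
Proof.
wlog le_ba : a b / b <= a => [hwlog a_ge0 b_ge0|a_ge0 b_ge0].
  have [le_ba|/ltW le_ab] := leP b a; first exact: hwlog.
  by rewrite -mulrNN !opprB hwlog.
by rewrite mulr_ge0 // subr_ge0 //; apply: (lerXn2r m); rewrite ?nnegrE.
Qed.

Section PowerMean.
Variables (R : realFieldType) (s : nat) (x : 'I_s -> R).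
Hypothesis x_ge0 : forall i, 0 <= x i.

Lemma chebyshev_pow_gap (m : nat) :
  2%:R * (s%:R * \sum_i x i ^+ m.+1 - (\sum_i x i) * (\sum_i x i ^+ m)) =
  \sum_i \sum_j (x i - x j) * (x i ^+ m - x j ^+ m).
Proof.
rewrite (chebyshev_identity x (fun i => x i ^+ m)).
by under [in RHS]eq_bigr => i _ do rewrite -exprS.
Qed.

Lemma chebyshev_pow_le (m : nat) :
  (\sum_i x i) * (\sum_i x i ^+ m) <= s%:R * \sum_i x i ^+ m.+1.
Proof.
rewrite -subr_ge0 -(pmulr_rge0 _ (ltr0Sn R 1)) chebyshev_pow_gap.
by do 2!apply: sumr_ge0 => ? _; apply: similarly_ordered_ge0.
Qed.

Lemma chebyshev_pow_eq (m : nat) : (0 < m)%N ->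
  (\sum_i x i) * (\sum_i x i ^+ m) = s%:R * \sum_i x i ^+ m.+1 ->
  forall i j, x i = x j.
Proof.
move=> m_gt0 eq_cheb i j.
have /eqP : \sum_i \sum_j (x i - x j) * (x i ^+ m - x j ^+ m) = 0.
  by rewrite -chebyshev_pow_gap eq_cheb subrr mulr0.
rewrite psumr_eq0 => [/allP/(_ i (mem_index_enum _))|k _]; last first.
  by apply: sumr_ge0 => l _; apply: similarly_ordered_ge0.
rewrite psumr_eq0 => [/allP/(_ j (mem_index_enum _))|l _]; last first.
  exact: similarly_ordered_ge0.
by rewrite /= mulf_eq0 !subr_eq0 (eqrXn2 m_gt0) // orbb => /eqP.
Qed.

Lemma power_mean_le (m : nat) :
  (\sum_i x i) ^+ m.+1 <= s%:R ^+ m * \sum_i x i ^+ m.+1.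
Proof.
have sum_ge0 : 0 <= \sum_i x i by apply: sumr_ge0.
elim: m => [|m IHm].
  by rewrite mul1r; under [in X in _ <= X]eq_bigr do rewrite expr1.
rewrite exprS; apply: (le_trans (ler_wpM2l sum_ge0 IHm)).
rewrite mulrCA exprSr -mulrA ler_wpM2l ?exprn_ge0 //.
exact: chebyshev_pow_le.
Qed.

(* Equality in the power mean inequality for exponent >= 2 forces x to be
   constant: it forces equality in the last Chebyshev step. *)
Lemma power_mean_eq (k : nat) : (0 < s)%N ->
  s%:R ^+ k.+1 * \sum_i x i ^+ k.+2 = (\sum_i x i) ^+ k.+2 ->
  forall i j, x i = x j.
Proof.
move=> s_gt0 eq_mean; apply: (@chebyshev_pow_eq k.+1) => //.
have sk_gt0 : 0 < s%:R ^+ k :> R by rewrite exprn_gt0 ?ltr0n.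
apply: (mulfI (lt0r_neq0 sk_gt0)); apply: le_anti.
rewrite (ler_pM2l sk_gt0) chebyshev_pow_le /=.
rewrite mulrA -exprSr eq_mean exprS mulrCA.
by apply: ler_wpM2l; [apply: sumr_ge0 | apply: power_mean_le].
Qed.

End PowerMean.

Lemma mxtrace_sqr (R : comPzRingType) (s : nat) (A : 'M[R]_s) :
  \tr (A ^+ 2) = \sum_i A i i ^+ 2 + \sum_i \sum_(j | j != i) A i j * A j i.
Proof.
rewrite /mxtrace -big_split /=; apply: eq_bigr => i _.
by rewrite expr2 -mulmxE mxE (bigD1 i) //= expr2.
Qed.

Lemma mxtrace_sqr_const_diag (R : comPzRingType) (s : nat) (A : 'M[R]_s) (c : R) :
  (forall i, A i i = c) -> (forall i j, i != j -> A i j * A j i = 0) ->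
  s%:R * \tr (A ^+ 2) = (\tr A) ^+ 2.
Proof.
move=> diagA offA.
have off_sum : \sum_i \sum_(j | j != i) A i j * A j i = 0.
  by apply: big1 => i _; apply: big1 => j; rewrite eq_sym => /offA.
rewrite mxtrace_sqr off_sum addr0 /mxtrace.
have -> : \sum_i A i i ^+ 2 = \sum_(i < s) c ^+ 2 by apply: eq_bigr => i _; rewrite diagA.
have -> : \sum_i A i i = \sum_(i < s) c by apply: eq_bigr => i _; rewrite diagA.
by rewrite !sumr_const card_ord -[c ^+ 2 *+ s]mulr_natl -[c *+ s]mulr_natl; ring.
Qed.

Section NonnegMatrix.
Variables (R : realFieldType) (s : nat) (A : 'M[R]_s).
Hypothesis A_ge0 : forall i j, 0 <= A i j.

Lemma mxpow_ge0 (n : nat) i j : 0 <= (A ^+ n) i j.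
Proof.
elim: n i j => [|n IHn] i j; first by rewrite expr0 mxE ler0n.
by rewrite exprSr -mulmxE mxE; apply: sumr_ge0 => k _; apply: mulr_ge0.
Qed.

(* The loop i -> i -> ... -> i contributes a_ii^n to (A^n)_ii. *)
Lemma mxpow_diag_ge (n : nat) i : A i i ^+ n <= (A ^+ n) i i.
Proof.
elim: n => [|n IHn]; first by rewrite expr0 mxE eqxx.
rewrite [A ^+ _]exprSr -mulmxE mxE (bigD1 i) //= exprSr.
rewrite -[leLHS]addr0 lerD ?ler_pM ?exprn_ge0 //.
by apply: sumr_ge0 => k _; apply: mulr_ge0 => //; apply: mxpow_ge0.
Qed.

Lemma sum_diag_pow_le_trace (n : nat) : \sum_i A i i ^+ n <= \tr (A ^+ n).
Proof. by apply: ler_sum => i _; apply: mxpow_diag_ge. Qed.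

Lemma mxtrace_pow_le (m : nat) :
  (\tr A) ^+ m.+1 <= s%:R ^+ m * \sum_i A i i ^+ m.+1 <= s%:R ^+ m * \tr (A ^+ m.+1).
Proof.
rewrite power_mean_le //.
by rewrite ler_wpM2l ?exprn_ge0 ?ler0n ?sum_diag_pow_le_trace.
Qed.

Lemma mxtrace_pow_eq (m : nat) : (0 < s)%N ->
  s%:R ^+ m * \tr (A ^+ m.+1) = (\tr A) ^+ m.+1 ->
  s%:R ^+ m * \sum_i A i i ^+ m.+1 = (\tr A) ^+ m.+1 /\
  \tr (A ^+ m.+1) = \sum_i A i i ^+ m.+1.
Proof.
move=> s_gt0 eq_tr; have /andP[le_mean le_diag] := mxtrace_pow_le m.
have eq_mean : s%:R ^+ m * \sum_i A i i ^+ m.+1 = (\tr A) ^+ m.+1.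
  by apply: le_anti; rewrite le_mean -[X in _ <= X]eq_tr le_diag.
split=> //; have sm_gt0 : 0 < s%:R ^+ m :> R by rewrite exprn_gt0 ?ltr0n.
by apply: (mulfI (lt0r_neq0 sm_gt0)); rewrite eq_tr eq_mean.
Qed.

Lemma mxtrace_pow_eq_const_diag (k : nat) : (0 < s)%N ->
  s%:R ^+ k.+1 * \tr (A ^+ k.+2) = (\tr A) ^+ k.+2 ->
  forall i j, A i i = A j j.
Proof.
move=> s_gt0 /(mxtrace_pow_eq s_gt0) [eq_mean _].
exact: (power_mean_eq (fun i => A_ge0 i i) s_gt0 eq_mean).
Qed.

Lemma mxtrace_sqr_diag_eq : \tr (A ^+ 2) = \sum_i A i i ^+ 2 ->
  forall i j, i != j -> A i j * A j i = 0.
Proof.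
rewrite mxtrace_sqr => /eqP; rewrite -subr_eq0 addrAC subrr add0r.
rewrite psumr_eq0 => [/allP offA i j neq_ij|i _]; last first.
  by apply: sumr_ge0 => j _; apply: mulr_ge0.
move: (offA i (mem_index_enum _)); rewrite psumr_eq0 => [|k _]; last first.
  exact: mulr_ge0.
by move=> /allP/(_ j (mem_index_enum _)); rewrite eq_sym neq_ij => /eqP.
Qed.

End NonnegMatrix.

Theorem lemma2p12 (R : realFieldType) (s n : nat) (A : 'M[R]_s) :
  (1 <= s)%N -> (2 <= n)%N -> (forall i j, 0 <= A i j) ->
  [/\ (\tr A) ^+ n <= s%:R ^+ (n - 1) * \tr (A ^+ n),
      n = 2%N ->
        (s%:R ^+ (n - 1) * \tr (A ^+ n) = (\tr A) ^+ n <->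
         (forall k : 'I_s, forall i1 : 'I_s, nat_of_ord i1 = 0%N -> A k k = A i1 i1) /\
         (forall i j : 'I_s, i != j -> A i j * A j i = 0))
    & (3 <= n)%N -> s%:R ^+ (n - 1) * \tr (A ^+ n) = (\tr A) ^+ n ->
        forall k : 'I_s, forall i1 : 'I_s, nat_of_ord i1 = 0%N -> A k k = A i1 i1].
Proof.
move=> s_gt0 n_ge2 A_ge0.
case: n n_ge2 => [|[|k]] // _; rewrite subn1 /=; split.
- by case/andP: (mxtrace_pow_le A_ge0 k.+1); apply: le_trans.
- case=> ->; split=> [eq_tr|[diagA offA]].
    split=> [i j _|]; first exact: (mxtrace_pow_eq_const_diag A_ge0 s_gt0 eq_tr).
    by case: (mxtrace_pow_eq A_ge0 s_gt0 eq_tr) => _; apply: mxtrace_sqr_diag_eq.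
  pose i0 : 'I_s := Ordinal s_gt0.
  rewrite expr1; apply: (@mxtrace_sqr_const_diag _ _ _ (A i0 i0)) => // i.
  exact: diagA.
- by move=> _ /(mxtrace_pow_eq_const_diag A_ge0 s_gt0) const_diag i j _.
Qed.
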